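(* Let $\mathbb{X}\subseteq\mathbb{P}^2$ be a $\Bbbk$-configuration of type $(d_1,\dots,d_s)$ with $s\ge2$, defined by subsets $\mathbb{X}_1,\dots,\mathbb{X}_s$ and lines $\mathbb{L}_1,\dots,\mathbb{L}_s$. Let $j,i$ be integers with $0\le j$ and $j+2\le i\le s-1$, and suppose that $|\mathbb{L}_{s-k}\cap\mathbb{X}|=d_s$ for $k=0,\dots,j$; $|\mathbb{L}_{s-k}\cap\mathbb{X}|<d_s$ for $k=j+1,\dots,i-1$; and $|\mathbb{L}_{s-i}\cap\mathbb{X}|=d_s$. Set $\mathbb{T}=\mathbb{L}_{s-i}\cap(\mathbb{X}_{s-j-1}\cup\mathbb{X}_{s-j-2}\cup\cdots\cup\mathbb{X}_{s-i+1})$. Then $\mathbb{X}$ is also a $\Bbbk$-configuration of type $(d_1,\dots,d_s)$ defined by the subsets $\mathbb{X}'_1,\dots,\mathbb{X}'_s$ and lines $\mathbb{L}'_1,\dots,\mathbb{L}'_s$, where: $\mathbb{X}'_k=\mathbb{X}_k$, $\mathbb{L}'_k=\mathbb{L}_k$ for $k=1,\dots,s-i-1$; $\mathbb{X}'_k=\mathbb{X}_{k+1}\setminus\mathbb{T}$, $\mathbb{L}'_k=\mathbb{L}_{k+1}$ for $k=s-i,\dots,s-j-2$; $\mathbb{X}'_{s-j-1}=\mathbb{X}_{s-i}\cup\mathbb{T}$, $\mathbb{L}'_{s-j-1}=\mathbb{L}_{s-i}$; and $\mathbb{X}'_k=\mathbb{X}_k$, $\mathbb{L}'_k=\mathbb{L}_k$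 for $k=s-j,\dots,s$.
   Context: $\Bbbk$ is an algebraically closed field. A $\Bbbk$-configuration of type $(d_1,\dots,d_s)$ is a finite set $\mathbb{X}\subseteq\mathbb{P}^2$ for which there exist integers $1\le d_1<\cdots<d_s$, subsets $\mathbb{X}_1,\dots,\mathbb{X}_s$ of $\mathbb{X}$ and distinct lines $\mathbb{L}_1,\dots,\mathbb{L}_s\subseteq\mathbb{P}^2$ such that (1) $\mathbb{X}=\bigcup_{i=1}^s\mathbb{X}_i$; (2) $|\mathbb{X}_i|=d_i$ and $\mathbb{X}_i\subseteq\mathbb{L}_i$ for each $i$; (3) for $1<i\le s$, $\mathbb{L}_i$ contains no point of $\mathbb{X}_j$ for any $j<i$. We say $\mathbb{X}$ is defined by these subsets and lines; such defining data need not be unique. *)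

From HB Require Import structures.
From mathcomp Require Import all_boot all_order all_algebra.
Set Implicit Arguments. Unset Strict Implicit. Unset Printing Implicit Defensive.
Import GRing.Theory.
Local Open Scope ring_scope.

(* A point of P^2 over K is represented by its unique normalized homogeneous
   coordinate vector: nonzero, with first nonzero coordinate equal to 1.
   Lines of P^2 are represented likewise by their normalized coefficient
   vectors (a,b,c), the line being {[x:y:z] | a x + b y + c z = 0}. *)
Definition normalized (K : fieldType) (v : K * K * K) : bool :=
  let: (a, b, c) := v in
  if a != 0 then a == 1 else if b != 0 then b == 1 else c == 1.

Definition P2 (K : fieldType) := {v : K * K * K | normalized v}.
Definition line (K : fieldType) := {v : K * K * K | normalized v}.

Definition on_line (K : fieldType) (p : P2 K) (L : line K) : bool :=
  let: (x, y, z) := val p in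
  let: (a, b, c) := val L in
  a * x + b * y + c * z == 0.

Definition has_card (K : fieldType) (A : pred (P2 K)) (n : nat) : Prop :=
  exists s : seq (P2 K), [/\ uniq s, size s = n & forall x, A x = (x \in s)].

Definition kconfig (K : fieldType) (s : nat) (d : nat -> nat)
    (X : pred (P2 K)) (Xs : nat -> pred (P2 K)) (Ls : nat -> line K) : Prop :=
  (0 < s)%N /\ (1 <= d 1)%N /\
  (forall i, (1 <= i < s)%N -> (d i < d i.+1)%N) /\
  (forall x, X x <-> exists2 i, (1 <= i <= s)%N & Xs i x) /\
  (forall i, (1 <= i <= s)%N ->
      has_card (Xs i) (d i) /\ (forall x, Xs i x -> on_line x (Ls i))) /\
  (forall i k, (1 <= i <= s)%N -> (1 <= k <= s)%N -> i <> k -> Ls i <> Ls k) /\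
  (forall i k, (1 <= k)%N -> (k < i)%N -> (i <= s)%N ->
      forall x, Xs k x -> ~~ on_line x (Ls i)).

From HB Require Import structures.
From mathcomp Require Import all_boot all_order all_algebra.
Import GRing.Theory.
From mathcomp Require Import ring zify.

(* Let a = s - i.  The line L_a contains d_s points of X: none of X_m for m < a, the d_a
   points of X_a, and at most one point of each X_m with m > a, since distinct lines meet
   at most once; so d_s <= d_a + (s - a).  The d_m strictly increase, so also
   d_s >= d_a + (s - a).  Hence L_a meets every X_m with m > a in exactly one point and
   d_m = d_a + (m - a) for m >= a.  Removing these points T from X_(a+1), ..., X_(s-j-1),
   shifting those sets down by one index and adding T to X_a (now placed at index s-j-1)
   therefore preserves all cardinalities, and the reordered lines still avoid the points
   of the earlier sets. *)

Lemma seq_choice {I : eqType} {U : Type} (u0 : U) {l : seq I} {P : I -> U -> Prop} :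
  (forall i, i \in l -> exists u, P i u) -> exists f : I -> U, forall i, i \in l -> P i (f i).
Proof.
elim: l => [|i l IHl] exP; first by exists (fun=> u0).
have [u Piu] := exP i (mem_head i l).
have [f Pf] : exists f : I -> U, forall j, j \in l -> P j (f j).
  by apply: IHl => j jl; apply: exP; rewrite inE jl orbT.
exists (fun j => if j == i then u else f j) => j; rewrite inE.
by have [-> | _ /= jl] := eqVneq j i; last exact: Pf.
Qed.

Lemma leq_sum_size {I : eqType} {r : seq I} {F : I -> nat} :
  {in r, forall i, F i <= 1} -> \sum_(i <- r) F i <= size r.
Proof. by move=> F_le1; rewrite -sum1_size big_seq [leqRHS]big_seq leq_sum. Qed.

Lemma sum_eq_size_all1 {I : eqType} {r : seq I} {F : I -> nat} :
  {in r, forall i, F i <= 1} -> size r <= \sum_(i <- r) F i -> {in r, forall i, F i = 1}.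
Proof.
elim: r => //= i r IHr F_le1; rewrite big_cons => sum_ge j.
have F_le1' : {in r, forall j, F j <= 1} by move=> k kr; apply: F_le1; rewrite inE kr orbT.
have := F_le1 i (mem_head i r); have := leq_sum_size F_le1'.
by rewrite inE => ? ? /predU1P[->|jr]; [|apply: IHr] => //; lia.
Qed.

Section PlaneGeometry.
Local Open Scope ring_scope.
Context {K : fieldType}.
Implicit Types (u v w : K * K * K) (p q : P2 K) (L : line K).

Definition cross u v : K * K * K :=
  let: (u1, u2, u3) := u in let: (v1, v2, v3) := v in
  (u2 * v3 - u3 * v2, u3 * v1 - u1 * v3, u1 * v2 - u2 * v1).

Definition dot u v : K :=
  let: (u1, u2, u3) := u in let: (v1, v2, v3) := v in u1 * v1 + u2 * v2 + u3 * v3.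

Definition nonzero3 v : bool :=
  let: (v1, v2, v3) := v in (v1 != 0) || (v2 != 0) || (v3 != 0).

Definition normalize v : K * K * K :=
  let: (v1, v2, v3) := v in
  if v1 != 0 then (1, v2 / v1, v3 / v1)
  else if v2 != 0 then (0, 1, v3 / v2) else (0, 0, 1).

Lemma normalized_nonzero3 {v} : normalized v -> nonzero3 v.
Proof.
case: v => [[v1 v2] v3] /=.
by case: (v1 != 0) => //; case: (v2 != 0) => // /eqP ->; rewrite oner_eq0.
Qed.

Lemma cross_self v : cross v v = (0, 0, 0).
Proof. by case: v => [[v1 v2] v3]; congr (_, _, _); ring. Qed.

Lemma normalized_cross_eq0 {u w} :
  normalized u -> nonzero3 w -> cross u w = (0, 0, 0) -> u = normalize w.
Proof.
case: u => [[u1 u2] u3]; case: w => [[w1 w2] w3] /=.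
move=> Nu Nw [] /eqP + /eqP + /eqP; rewrite !subr_eq0 => /eqP E1 /eqP E2 /eqP E3.
have [w1_0|w1_nz] := eqVneq w1 0; last first.
  have [u1_0|u1_nz] := eqVneq u1 0.
    move: E2 E3 Nu; rewrite u1_0 !mul0r => /eqP + /esym/eqP.
    rewrite !mulf_eq0 (negbTE w1_nz) !orbF => /eqP-> /eqP->.
    by rewrite /= eqxx /= eq_sym oner_eq0.
  move: Nu; rewrite (negbTE u1_nz) => /eqP u1_1; rewrite u1_1 in E2 E3 *.
  rewrite mul1r in E2; rewrite mul1r in E3.
  by congr (_, _, _); apply: (mulIf w1_nz); rewrite divfK.
rewrite /=; have [w2_0|w2_nz] := eqVneq w2 0.
  move: Nw E1 E2; rewrite w1_0 w2_0 !mulr0 eqxx /= => w3_nz /eqP + /esym/eqP.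
  rewrite !mulf_eq0 (negbTE w3_nz) !orbF => /eqP u2_0 /eqP u1_0.
  by move: Nu; rewrite u1_0 u2_0 eqxx /= => /eqP->.
move: E3; rewrite w1_0 mulr0 => /eqP; rewrite mulf_eq0 (negbTE w2_nz) orbF => /eqP u1_0.
rewrite u1_0 in Nu *; have [u2_0|u2_nz] := eqVneq u2 0.
  move: E1; rewrite u2_0 mul0r => /esym/eqP; rewrite mulf_eq0 (negbTE w2_nz) orbF.
  by move: Nu => + /eqP u3_0; rewrite u2_0 u3_0 eqxx /= eq_sym oner_eq0.
move: Nu; rewrite eqxx (negbTE u2_nz) /= => /eqP u2_1; rewrite u2_1 mul1r in E1 *.
by congr (_, _, _); apply: (mulIf w2_nz); rewrite divfK.
Qed.

Lemma cross_cross_orth {w u v} :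
  dot w u = 0 -> dot w v = 0 -> cross w (cross u v) = (0, 0, 0).
Proof.
case: w u v => [[w1 w2] w3] [[u1 u2] u3] [[v1 v2] v3] /= wu wv.
have E1 : w2 * (u1 * v2 - u2 * v1) - w3 * (u3 * v1 - u1 * v3)
  = u1 * (w1 * v1 + w2 * v2 + w3 * v3) - v1 * (w1 * u1 + w2 * u2 + w3 * u3) by ring.
have E2 : w3 * (u2 * v3 - u3 * v2) - w1 * (u1 * v2 - u2 * v1)
  = u2 * (w1 * v1 + w2 * v2 + w3 * v3) - v2 * (w1 * u1 + w2 * u2 + w3 * u3) by ring.
have E3 : w1 * (u3 * v1 - u1 * v3) - w2 * (u2 * v3 - u3 * v2)
  = u3 * (w1 * v1 + w2 * v2 + w3 * v3) - v3 * (w1 * u1 + w2 * u2 + w3 * u3) by ring.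
by rewrite E1 E2 E3 wu wv !mulr0 subrr.
Qed.

Lemma on_lineE p L : on_line p L = (dot (val L) (val p) == 0).
Proof. by rewrite /on_line; case: (val p) => [[? ?] ?]; case: (val L) => [[? ?] ?]. Qed.

(* If p <> q, both lines are the normalization of the cross product of p and q. *)
Lemma on_two_lines_eq {p q L1 L2} :
  on_line p L1 -> on_line q L1 -> on_line p L2 -> on_line q L2 -> L1 <> L2 -> p = q.
Proof.
rewrite !on_lineE => /eqP pL1 /eqP qL1 /eqP pL2 /eqP qL2 L1L2.
have [nzpq|zpq] := boolP (nonzero3 (cross (val p) (val q))).
  case: L1L2; apply: val_inj.
  rewrite /= (normalized_cross_eq0 (valP L1) nzpq (cross_cross_orth pL1 qL1)).
  by rewrite (normalized_cross_eq0 (valP L2) nzpq (cross_cross_orth pL2 qL2)).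
have nq := normalized_nonzero3 (valP q).
have pq0 : cross (val p) (val q) = (0, 0, 0).
  move: zpq; case: (val p) (val q) => [[? ?] ?] [[? ?] ?] /=.
  by rewrite !negb_or !negbK => /andP[/andP[/eqP-> /eqP->] /eqP->].
apply: val_inj => /=.
rewrite (normalized_cross_eq0 (valP p) nq pq0).
by rewrite -(normalized_cross_eq0 (valP q) nq (cross_self _)).
Qed.

End PlaneGeometry.

Section Cardinality.
Context {K : fieldType}.
Implicit Types (A B : pred (P2 K)) (P : pred (P2 K)).

Lemma has_card_ext {A B n} : A =1 B -> has_card A n -> has_card B n.
Proof. by move=> AB [t [ut szt At]]; exists t; split=> // x; rewrite -AB. Qed.

Lemma has_card_unique {A m n} : has_card A m -> has_card A n -> m = n.
Proof.
move=> [t1 [u1 <- A1]] [t2 [u2 <- A2]].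
by apply: perm_size; apply: uniq_perm => // x; rewrite -A1 A2.
Qed.

Lemma has_card_le1 {A n} : (forall x y, A x -> A y -> x = y) -> has_card A n -> n <= 1.
Proof.
move=> A_eq [[|x [|y t]] [ut <- At]] //=.
move: ut; rewrite /= inE (A_eq x y) ?At ?mem_head ?inE ?eqxx ?orbT //.
Qed.

Lemma has_cardU {A B m n} : (forall x, A x -> B x -> False) ->
  has_card A m -> has_card B n -> has_card [pred x | A x || B x] (m + n).
Proof.
move=> AB [t1 [u1 <- A1]] [t2 [u2 <- A2]]; exists (t1 ++ t2); split.
- rewrite cat_uniq u1 u2 andbT; apply/hasPn => x; rewrite -A1 -A2.
  by move=> Bx; apply/negP => Ax; case: (AB x).
- exact: size_cat.
- by move=> x; rewrite /= mem_cat A1 A2.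
Qed.

Lemma has_card_bigU {I : eqType} {l : seq I} (A : I -> pred (P2 K)) (n : I -> nat) :
  uniq l ->
  (forall i i' x, i \in l -> i' \in l -> A i x -> A i' x -> i = i') ->
  (forall i, i \in l -> has_card (A i) (n i)) ->
  has_card [pred x | has (A^~ x) l] (\sum_(i <- l) n i).
Proof.
elim: l => [|i l IHl] /=; first by exists [::]; rewrite big_nil.
move=> /andP[il ul] A_disj A_card; rewrite big_cons.
have A_disj' i1 i2 x : i1 \in l -> i2 \in l -> A i1 x -> A i2 x -> i1 = i2.
  by move=> i1l i2l; apply: A_disj; rewrite inE ?i1l ?i2l orbT.
apply: has_cardU; last 2 first.
- exact/A_card/mem_head.
- by apply: IHl => // j jl; apply: A_card; rewrite inE jl orbT.
move=> x Aix /hasP[j jl Ajx]; move: il.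
by rewrite (A_disj i j x) ?jl ?mem_head ?inE ?jl ?orbT.
Qed.

Lemma has_card_split {A} P {n} : has_card A n ->
  exists k1 k2, [/\ k1 + k2 = n, has_card [pred x | A x && P x] k1
                  & has_card [pred x | A x && ~~ P x] k2].
Proof.
move=> [t [ut <- At]]; exists (count P t), (count (predC P) t); split.
- exact: count_predC.
- exists (filter P t); rewrite filter_uniq ?size_filter //; split=> // x.
  by rewrite /= mem_filter -At andbC.
- exists (filter (predC P) t); rewrite filter_uniq ?size_filter //; split=> // x.
  by rewrite /= mem_filter -At andbC.
Qed.

End Cardinality.

Section KConfiguration.
Context {K : fieldType} {s : nat} {d : nat -> nat}.
Context {X : pred (P2 K)} {Xs : nat -> pred (P2 K)} {Ls : nat -> line K}.
Hypotheses (s_gt0 : 0 < s) (d1_gt0 : 0 < d 1).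
Hypothesis d_incr : forall i, 1 <= i < s -> d i < d i.+1.
Hypothesis X_cover : forall x, X x <-> exists2 i, 1 <= i <= s & Xs i x.
Hypothesis Xs_card : forall {i}, 1 <= i <= s -> has_card (Xs i) (d i).
Hypothesis Xs_on_line : forall {i}, 1 <= i <= s -> forall {x}, Xs i x -> on_line x (Ls i).
Hypothesis Ls_inj : forall i k, 1 <= i <= s -> 1 <= k <= s -> i <> k -> Ls i <> Ls k.
Hypothesis Xs_off_line :
  forall {i k}, 1 <= k -> k < i -> i <= s -> forall {x}, Xs k x -> ~~ on_line x (Ls i).

Lemma d_add_le m n : 1 <= m <= n -> n <= s -> d m + (n - m) <= d n.
Proof.
move=> /andP[m_gt0]; elim: n => [|n IHn] mn ns; first lia.
have [->|mn'] := eqVneq m n.+1; first by rewrite subnn addn0.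
have IH : d m + (n - m) <= d n by apply: IHn; lia.
have dn : d n < d n.+1 by apply: d_incr; lia.
lia.
Qed.

Lemma on_later_line_Xs {k i x} : 1 <= k < i -> i <= s -> Xs k x -> on_line x (Ls i) = false.
Proof. by move=> /andP[k_gt0 ki] i_le_s xk; apply/negbTE/(Xs_off_line k_gt0 ki i_le_s xk). Qed.

Lemma Xs_disjoint {m m' x} : 1 <= m <= s -> 1 <= m' <= s -> Xs m x -> Xs m' x -> m = m'.
Proof.
move=> hm hm' xm xm'; case: (ltngtP m m') => // [lt_mm'|lt_m'm].
  by move: (Xs_on_line hm' xm'); rewrite (on_later_line_Xs _ _ xm) //; lia.
by move: (Xs_on_line hm xm); rewrite (on_later_line_Xs _ _ xm') //; lia.
Qed.

Section LineOfMaximalSize.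
Variable a : nat.
Hypotheses (a_gt0 : 0 < a) (a_le_s : a <= s).
Hypothesis La_card : has_card [pred x | X x && on_line x (Ls a)] (d s).

(* The set T of the paper, for c = s - j. *)
Definition trace c : pred (P2 K) :=
  [pred x | on_line x (Ls a) && has (fun m => Xs m x) (index_iota a.+1 c)].

Lemma traceP c x : trace c x -> on_line x (Ls a) /\ exists2 m, a < m < c & Xs m x.
Proof.
by rewrite /trace /= => /andP[xLa /hasP[m]]; rewrite mem_index_iota; split=> //; exists m.
Qed.

Lemma trace_Xs {c m x} : a < m < c -> Xs m x -> trace c x = on_line x (Ls a).
Proof.
move=> hm xm; rewrite /trace /=; case: (on_line x (Ls a)) => //=.
by apply/hasP; exists m; rewrite ?mem_index_iota.
Qed.

Lemma on_La_Xs_le1 m k : a < m <= s ->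
  has_card [pred x | Xs m x && on_line x (Ls a)] k -> k <= 1.
Proof.
move=> hm; have hm' : 1 <= m <= s by lia.
apply: has_card_le1 => x y /andP[xm xLa] /andP[ym yLa].
apply: (on_two_lines_eq (Xs_on_line hm' xm) (Xs_on_line hm' ym) xLa yLa).
by apply: Ls_inj; lia.
Qed.

Lemma has_card_trace c (n : nat -> nat) : c <= s.+1 ->
  (forall m, a < m < c -> has_card [pred x | Xs m x && on_line x (Ls a)] (n m)) ->
  has_card (trace c) (\sum_(a.+1 <= m < c) n m).
Proof.
move=> cs n_card.
pose A m : pred (P2 K) := [pred x | Xs m x && on_line x (Ls a)].
apply: (has_card_ext _ (has_card_bigU A n (iota_uniq _ _) _ _)) => [x|m m' x|m].
- apply/hasP/andP => [[m ml /andP[xm xLa]]|[xLa /hasP[m ml xm]]].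
    by split=> //; apply/hasP; exists m.
  by exists m => //; apply/andP.
- rewrite !mem_index_iota => hm hm' /andP[xm _] /andP[xm' _].
  by apply: (Xs_disjoint _ _ xm xm'); lia.
- by rewrite mem_index_iota; apply: n_card.
Qed.

Lemma X_on_La x : X x && on_line x (Ls a) = Xs a x || trace s.+1 x.
Proof.
apply/andP/orP => [[/X_cover[m hm xm] xLa]|[xa|/traceP[xLa [m hm xm]]]].
- case: (ltngtP m a) => [lt_ma|lt_am|<-]; [|right|by left].
    by move: xLa; rewrite (on_later_line_Xs _ _ xm) //; lia.
  by rewrite (trace_Xs _ xm) //; lia.
- by split; [apply/X_cover; exists a; rewrite ?a_gt0 | apply: Xs_on_line; rewrite ?a_gt0].
- by split=> //; apply/X_cover; exists m => //; lia.
Qed.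

Lemma Xs_trace_disjoint {c} : c <= s.+1 -> forall x, Xs a x -> trace c x -> False.
Proof.
move=> cs x xa /traceP[_ [m hm xm]].
by have := Xs_disjoint _ _ xa xm; lia.
Qed.

Lemma La_count : d s = d a + (s - a) /\
  forall m, a < m <= s -> has_card [pred x | Xs m x && on_line x (Ls a)] 1.
Proof.
pose r := index_iota a.+1 s.+1.
have [f f_spec] : exists f : nat -> nat, forall m, m \in r ->
    f m <= 1 /\ has_card [pred x | Xs m x && on_line x (Ls a)] (f m).
  apply: (seq_choice 0 (P := fun m k =>
    k <= 1 /\ has_card [pred x | Xs m x && on_line x (Ls a)] k)) => m.
  rewrite mem_index_iota => hm.
  have m_le_s : 1 <= m <= s by lia.
  have [k1 [k2 [_ k1_card _]]] := has_card_split (fun x => on_line x (Ls a)) (Xs_card m_le_s).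
  by exists k1; split=> //; apply: on_La_Xs_le1 k1_card; lia.
have f_le1 : {in r, forall m, f m <= 1} by move=> m /f_spec[].
have Xa_card : has_card (Xs a) (d a) by apply: Xs_card; lia.
have trace_card : has_card (trace s.+1) (\sum_(m <- r) f m).
  by apply: has_card_trace => // m hm; case: (f_spec m); rewrite ?mem_index_iota.
have ds : d s = d a + \sum_(m <- r) f m.
  apply: (has_card_unique La_card); apply: (has_card_ext (fun x => esym (X_on_La x))).
  exact: has_cardU (Xs_trace_disjoint (leqnn _)) Xa_card trace_card.
have sum_le : \sum_(m <- r) f m <= size r := leq_sum_size f_le1.
have d_ge : d a + (s - a) <= d s by apply: d_add_le; lia.
have sum_eq : \sum_(m <- r) f m = size r by move: sum_le; rewrite size_iota; lia.
split=> [|m hm]; first by move: sum_eq; rewrite size_iota; lia.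
have mr : m \in r by rewrite mem_index_iota.
by have [_] := f_spec m mr; rewrite (sum_eq_size_all1 f_le1 (eq_leq (esym sum_eq)) m mr).
Qed.

Lemma d_La m : a <= m <= s -> d m = d a + (m - a).
Proof.
move=> hm; have [ds _] := La_count.
have : d a + (m - a) <= d m by apply: d_add_le; lia.
have : d m + (s - m) <= d s by apply: d_add_le; lia.
lia.
Qed.

Lemma trace_card c : a < c <= s.+1 -> has_card (trace c) (c - a.+1).
Proof.
move=> hc; rewrite -[c - a.+1]muln1 -sum_nat_const_nat.
by apply: has_card_trace => [|m hm]; [lia | apply: La_count.2; lia].
Qed.

Section Rotation.
Variable c : nat.
Hypotheses (a_lt_c : a < c) (c_le_s : c <= s).

(* The paper's X'_k and L'_k for c = s - j, spelled as in lemma2p9 so that they are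
   convertible to its let-bindings. *)
Definition Xr k : pred (P2 K) :=
  if k < a then Xs k
  else if k <= c - 2 then (fun x => Xs k.+1 x && ~~ trace c x)
  else if k == c - 1 then (fun x => Xs a x || trace c x)
  else Xs k.

Definition Lr k : line K :=
  if k < a then Ls k
  else if k <= c - 2 then Ls k.+1
  else if k == c - 1 then Ls a
  else Ls k.

Variant Xr_spec k : pred (P2 K) -> line K -> Prop :=
  | XrBelow of k < a : Xr_spec k (Xs k) (Ls k)
  | XrShifted of a <= k <= c - 2 :
      Xr_spec k (fun x => Xs k.+1 x && ~~ trace c x) (Ls k.+1)
  | XrMoved of k = c - 1 : Xr_spec k (fun x => Xs a x || trace c x) (Ls a)
  | XrAbove of c <= k : Xr_spec k (Xs k) (Ls k).

Lemma XrP k : Xr_spec k (Xr k) (Lr k).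
Proof.
rewrite /Xr /Lr; case: ltnP => [|ak]; first exact: XrBelow.
case: leqP => [kc|ck]; first by apply: XrShifted; rewrite ak.
by case: eqP => [|kc]; [apply: XrMoved | apply: XrAbove; lia].
Qed.

Lemma Xr_on_line k : 1 <= k <= s -> forall x, Xr k x -> on_line x (Lr k).
Proof.
move=> hk x; case: (XrP k) => hk'.
- exact: Xs_on_line.
- by move=> /andP[xk _]; apply: Xs_on_line xk; lia.
- by move=> /orP[xa|/traceP[]//]; apply: Xs_on_line xa; lia.
- exact: Xs_on_line.
Qed.

Lemma Xr_card k : 1 <= k <= s -> has_card (Xr k) (d k).
Proof.
move=> hk; case: (XrP k) => hk'; try exact: Xs_card.
- have hk1 : 1 <= k.+1 <= s by lia.
  have [k1 [k2 [k12 k1_card k2_card]]] := has_card_split (fun x => on_line x (Ls a)) (Xs_card hk1).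
  have ak1 : a < k.+1 <= s by lia.
  have k1_1 := has_card_unique k1_card (La_count.2 k.+1 ak1).
  have dk : d k = d a + (k - a) by apply: d_La; lia.
  have dk1 : d k.+1 = d a + (k.+1 - a) by apply: d_La; lia.
  have -> : d k = k2 by lia.
  apply: (has_card_ext _ k2_card) => x /=.
  by case xk: (Xs k.+1 x); rewrite //= (trace_Xs _ xk) //; lia.
- have -> : d k = d a + (c - a.+1) by rewrite hk' d_La; lia.
  have Xa_card : has_card (Xs a) (d a) by apply: Xs_card; lia.
  have Tc_card : has_card (trace c) (c - a.+1) by apply: trace_card; lia.
  exact: has_cardU (Xs_trace_disjoint (ltnW _)) Xa_card Tc_card.
Qed.

Lemma Lr_inj i k : 1 <= i <= s -> 1 <= k <= s -> i <> k -> Lr i <> Lr k.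
Proof.
by move=> hi hk ik; case: (XrP i) => hi'; case: (XrP k) => hk'; apply: Ls_inj; lia.
Qed.

Lemma X_cover_Xr x : X x <-> exists2 k, 1 <= k <= s & Xr k x.
Proof.
rewrite X_cover; split=> [[m hm xm]|[k hk]]; last first.
  case: (XrP k) => hk' => [xk|/andP[xk _]|/orP[xa|/traceP[_ [m hm xm]]]|xk].
  - by exists k.
  - by exists k.+1 => //; lia.
  - by exists a => //; lia.
  - by exists m => //; lia.
  - by exists k.
have Xr_c1 : Xs a x || trace c x -> exists2 k, 1 <= k <= s & Xr k x.
  by exists (c - 1); [lia | case: (XrP (c - 1)) => //; lia].
have [ma|am] := ltnP m a; first by exists m => //; case: (XrP m) => //; lia.
have [cm|mc] := leqP c m; first by exists m => //; case: (XrP m) => //; lia.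
have [ma_eq|ma'] := eqVneq m a; first by apply: Xr_c1; rewrite -ma_eq xm.
have hm' : a < m < c by lia.
case xLa: (on_line x (Ls a)); first by apply: Xr_c1; rewrite (trace_Xs hm' xm) xLa orbT.
exists m.-1; first lia.
case: (XrP m.-1) => ?; try lia.
by rewrite prednK ?xm ?(trace_Xs hm' xm) ?xLa //; lia.
Qed.

Lemma Xr_off_line i k :
  1 <= k -> k < i -> i <= s -> forall x, Xr k x -> ~~ on_line x (Lr i).
Proof.
move=> k_gt0 ki i_le_s x.
case: (XrP k) => hk => [xm|/andP[xm nT]|/orP[xm|/traceP[_ [m hm xm]]]|xm];
  case: (XrP i) => hi; try (exfalso; lia); try (by rewrite (on_later_line_Xs _ _ xm) //; lia).
by rewrite -(trace_Xs (c:=c) _ xm) //; lia.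
Qed.

Lemma kconfig_rotate : kconfig s d X Xr Lr.
Proof.
do 3 (split=> //); split; first exact: X_cover_Xr.
split; first by move=> k hk; split; [apply: Xr_card | apply: Xr_on_line].
by split; [apply: Lr_inj | apply: Xr_off_line].
Qed.

End Rotation.
End LineOfMaximalSize.
End KConfiguration.

Theorem lemma2p9 (K : closedFieldType) (s : nat) (d : nat -> nat)
  (X : pred (P2 K)) (Xs : nat -> pred (P2 K)) (Ls : nat -> line K)
  (j i : nat) :
  kconfig s d X Xs Ls ->
  (2 <= s)%N ->
  (j + 2 <= i)%N -> (i <= s - 1)%N ->
  (forall k, (k <= j)%N -> has_card [pred x | X x && on_line x (Ls (s - k))] (d s)) ->
  (forall k, (j + 1 <= k <= i - 1)%N ->
     exists2 n, (n < d s)%N & has_card [pred x | X x && on_line x (Ls (s - k))] n) ->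
  has_card [pred x | X x && on_line x (Ls (s - i))] (d s) ->
  let T : pred (P2 K) := [pred x | on_line x (Ls (s - i)) &&
        has (fun m => Xs m x) (index_iota (s - i).+1 (s - j))] in
  let Xs' : nat -> pred (P2 K) := fun k =>
    if (k < s - i)%N then Xs k
    else if (k <= s - j - 2)%N then (fun x => Xs k.+1 x && ~~ T x)
    else if k == (s - j - 1)%N then (fun x => Xs (s - i) x || T x)
    else Xs k in
  let Ls' : nat -> line K := fun k =>
    if (k < s - i)%N then Ls k
    else if (k <= s - j - 2)%N then Ls k.+1
    else if k == (s - j - 1)%N then Ls (s - i)
    else Ls k in
  kconfig s d X Xs' Ls'.
Proof.
(* Only the hypothesis on L_(s-i) is needed. *)
move=> [s_gt0 [d1_gt0 [d_incr [X_cover [Xs_line [Ls_inj Xs_off]]]]]] _ ji i_lt_s _ _ La_card.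
have Xs_card k (hk : 1 <= k <= s) := (Xs_line k hk).1.
have Xs_on_line k (hk : 1 <= k <= s) := (Xs_line k hk).2.
apply: (kconfig_rotate s_gt0 d1_gt0 d_incr X_cover Xs_card Xs_on_line Ls_inj Xs_off
  (s - i) _ _ La_card (s - j)); lia.
Qed.
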